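(* Let $m\ge 1$, let ${\bf h}\in\mathbb{F}_q^m$ be a nonzero column vector, and let $C$ be the linear $[m+1,m,d]_q$ code with generator matrix $G=[I\,|\,{\bf h}]$, where $I$ is the $m\times m$ identity matrix. If $\mathrm{wt}({\bf h})<m$, then $C$ is a completely regular code with $d=\rho=1$. If $\mathrm{wt}({\bf h})=m$, then $C$ is a completely regular code with $d=2$ and $\rho=1$.
   Context: $\mathbb{F}_q$ is the finite field with $q$ elements; $\mathrm{wt}$ is Hamming weight, $d$ the minimum Hamming distance of the code, and $\rho=\max_{{\bf v}\in\mathbb{F}_q^{m+1}}\min_{{\bf x}\in C}d({\bf v},{\bf x})$ its covering radius. A code $C$ is completely regular if for every vector ${\bf x}$, with $t=d({\bf x},C)$, the number of codewords at distance $i$ from ${\bf x}$ depends only on $t$ and $i$. *)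

From mathcomp Require Import all_boot all_order all_algebra all_field.
Set Implicit Arguments. Unset Strict Implicit. Unset Printing Implicit Defensive.
Import GRing.Theory.
Local Open Scope ring_scope.

Section Codes.
Variables (F : finFieldType) (n : nat).

Definition wt (v : 'rV[F]_n) : nat := #|[set i : 'I_n | v 0 i != 0]|.

Definition hdist (x y : 'rV[F]_n) : nat := wt (x - y).

(* minimum distance of a code (meaningful when C has >= 2 codewords;
   default value n is >= every distance) *)
Definition min_dist (C : {set 'rV[F]_n}) : nat :=
  \big[minn/n]_(xy in [set xy : 'rV[F]_n * 'rV[F]_n |
                        (xy.1 \in C) && (xy.2 \in C) && (xy.1 != xy.2)])
     hdist xy.1 xy.2.

Definition dist_code (v : 'rV[F]_n) (C : {set 'rV[F]_n}) : nat :=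
  \big[minn/n]_(c in C) hdist v c.

Definition covering_radius (C : {set 'rV[F]_n}) : nat :=
  \max_(v : 'rV[F]_n) dist_code v C.

Definition completely_regular (C : {set 'rV[F]_n}) : Prop :=
  forall x y : 'rV[F]_n, dist_code x C = dist_code y C ->
    forall i : nat,
      #|[set c in C | hdist x c == i]| = #|[set c in C | hdist y c == i]|.

End Codes.

Definition code_of_gen (F : finFieldType) (k n : nat) (G : 'M[F]_(k, n))
  : {set 'rV[F]_n} := [set u *m G | u : 'rV[F]_k].

Definition gen_Ih (F : finFieldType) (m : nat) (h : 'cV[F]_m) : 'M[F]_(m, m + 1) :=
  row_mx 1%:M h.

From mathcomp Require Import all_boot all_order all_algebra all_field.
Set Implicit Arguments. Unset Strict Implicit. Unset Printing Implicit Defensive.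
Import Order.TTheory GRing.Theory.
Local Open Scope ring_scope.

(* The code generated by [I | h] is the kernel of the single parity check
   v |-> v *m (-h; 1).  For a code given by one check s, the distance from v to
   the code is 0 or 1 according as the syndrome of v vanishes or not, and for
   x, y with syndromes both zero or both nonzero the affine bijection
   c |-> y + k (c - x), k the ratio of the syndromes, maps the codewords at
   distance i from x onto those at distance i from y: the code is completely
   regular with covering radius 1.  Its minimum distance is 1 when s has a zero
   entry (a unit vector is a codeword) and 2 when all entries of s are nonzero
   (no unit vector is, but s_j e_i - s_i e_j is). *)

Section Weight.
Variables (F : finFieldType) (n : nat).
Implicit Types (u v : 'rV[F]_n) (a : F).

Lemma wt_gt0 v : (0 < wt v)%N = (v != 0).
Proof.
rewrite /wt card_gt0; apply/set0Pn/rV0Pn => -[i vi0]; exists i.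
  by rewrite inE in vi0.
by rewrite inE.
Qed.

Lemma wt0 : wt (0 : 'rV[F]_n) = 0%N.
Proof. by apply/eqP; rewrite -leqn0 leqNgt wt_gt0 eqxx. Qed.

Lemma hdistvv v : hdist v v = 0%N.
Proof. by rewrite /hdist subrr wt0. Qed.

Lemma wt_scale a v : a != 0 -> wt (a *: v) = wt v.
Proof. by move=> a0; apply: eq_card => i; rewrite !inE mxE mulf_eq0 (negbTE a0). Qed.

Lemma wt_scale_le a v : (wt (a *: v) <= wt v)%N.
Proof.
by apply: subset_leq_card; apply/subsetP => i; rewrite !inE mxE mulf_eq0 negb_or => /andP[].
Qed.

Lemma wt_add_le u v : (wt (u + v) <= wt u + wt v)%N.
Proof.
apply: leq_trans (leq_card_setU _ _).1; apply: subset_leq_card; apply/subsetP => i.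
rewrite !inE mxE; apply: contraR; rewrite negb_or !negbK => /andP[/eqP-> /eqP->].
by rewrite addr0.
Qed.

Lemma wt_delta i : wt (delta_mx 0 i : 'rV[F]_n) = 1%N.
Proof.
rewrite -[RHS](cards1 i); apply: eq_card => j; rewrite !inE mxE /=.
by case: (j == i); rewrite ?oner_eq0 ?eqxx.
Qed.

Lemma wt_eq1 v : wt v = 1%N -> exists2 j, v 0 j != 0 & v = v 0 j *: delta_mx 0 j.
Proof.
move/eqP/cards1P => [j supp_v]; have := set11 j; rewrite -supp_v inE => vj0.
exists j => //; apply/rowP => k; rewrite !mxE.
have [->|kj] := eqVneq k j; first by rewrite mulr1.
have : k \notin [set j] by rewrite in_set1.
by rewrite -supp_v inE negbK mulr0 => /eqP.
Qed.

Lemma wt_eqP v : reflect (forall i, v 0 i != 0) (wt v == n).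
Proof.
rewrite /wt -[n in _ == n]card_ord -(cardsC [set i | v 0 i != 0]).
rewrite -{1}[#|_|]addn0 eqn_add2l eq_sym cards_eq0.
apply: (iffP eqP) => [/setP supp_v i|supp_v]; last first.
  by apply/setP => i; rewrite !inE negbK (negbTE (supp_v i)).
by have := supp_v i; rewrite !inE negbK => /negbT.
Qed.

End Weight.

Section CodeDistances.
Variables (F : finFieldType) (n : nat) (C : {set 'rV[F]_n}).
Implicit Types (x c d : 'rV[F]_n) (r : nat).

Lemma dist_code_le x c : c \in C -> (dist_code x C <= hdist x c)%N.
Proof. by move=> cC; rewrite /dist_code -minEnat -leEnat bigmin_le_cond. Qed.

Lemma dist_code_ge r x :
  (r <= n)%N -> (forall c, c \in C -> r <= hdist x c)%N -> (r <= dist_code x C)%N.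
Proof. by move=> rn r_le; rewrite /dist_code -minEnat -leEnat le_bigmin. Qed.

Lemma min_dist_le c d : c \in C -> d \in C -> c != d -> (min_dist C <= hdist c d)%N.
Proof.
move=> cC dC cd; rewrite /min_dist -minEnat -leEnat.
by rewrite (@bigmin_le_cond _ _ _ _ (c, d)) // inE /= cC dC.
Qed.

Lemma min_dist_ge r : (r <= n)%N ->
  (forall c d, c \in C -> d \in C -> c != d -> r <= hdist c d)%N -> (r <= min_dist C)%N.
Proof.
move=> rn r_le; rewrite /min_dist -minEnat -leEnat le_bigmin // => -[c d].
by rewrite inE /= => /andP[/andP[cC dC] cd]; apply: r_le.
Qed.

End CodeDistances.

Definition syndrome (F : fieldType) n (s : 'cV[F]_n) (v : 'rV[F]_n) : F := (v *m s) 0 0.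

Definition parity_code (F : finFieldType) n (s : 'cV[F]_n) : {set 'rV[F]_n} :=
  [set v | syndrome s v == 0].

Section ParityCode.
Variables (F : finFieldType) (n : nat) (s : 'cV[F]_n).
Local Notation syn := (syndrome s).
Local Notation C := (parity_code s).
Implicit Types (u v x y c : 'rV[F]_n) (a : F).

Lemma syndromeD u v : syn (u + v) = syn u + syn v.
Proof. by rewrite /syndrome mulmxDl mxE. Qed.

Lemma syndromeZ a v : syn (a *: v) = a * syn v.
Proof. by rewrite /syndrome -scalemxAl mxE. Qed.

Lemma syndromeB u v : syn (u - v) = syn u - syn v.
Proof. by rewrite syndromeD -scaleN1r syndromeZ mulN1r. Qed.

Lemma syndrome_delta i : syn (delta_mx 0 i) = s i 0.
Proof. by rewrite /syndrome -rowE mxE. Qed.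

Lemma mem_parity_code v : (v \in C) = (syn v == 0).
Proof. by rewrite inE. Qed.

Lemma dist_parity_code v : dist_code v C = (syn v != 0).
Proof.
have [synv0|synvN0] := eqVneq (syn v) 0.
  have vC : v \in C by rewrite mem_parity_code synv0.
  by apply/eqP; rewrite -leqn0 -(hdistvv v) dist_code_le.
have [i si0] : exists i, s i 0 != 0.
  by apply/cV0Pn; apply: contra_neq synvN0 => s0; rewrite /syndrome s0 mulmx0 mxE.
apply/eqP; rewrite eqn_leq; apply/andP; split.
  pose c := v - (syn v / s i 0) *: delta_mx 0 i.
  have cC : c \in C.
    by rewrite mem_parity_code syndromeB syndromeZ syndrome_delta divfK // subrr.
  apply: leq_trans (dist_code_le _ cC) _.
  by rewrite /hdist /c opprB addrC subrK (leq_trans (wt_scale_le _ _)) ?wt_delta.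
apply: dist_code_ge => [|c cC]; first exact: leq_ltn_trans (leq0n i) (ltn_ord i).
rewrite wt_gt0 subr_eq0; apply: contra_neq synvN0 => ->.
by apply/eqP; rewrite -mem_parity_code.
Qed.

Lemma covering_radius_parity_code : s != 0 -> covering_radius C = 1%N.
Proof.
case/cV0Pn => i si0; apply/eqP; rewrite eqn_leq; apply/andP; split.
  by apply/bigmax_leqP => v _; rewrite dist_parity_code leq_b1.
by apply: leq_trans (leq_bigmax (delta_mx 0 i)); rewrite dist_parity_code syndrome_delta si0.
Qed.

Lemma card_parity_sphere_le x y i : (syn x == 0) = (syn y == 0) ->
  (#|[set c in C | hdist x c == i]| <= #|[set c in C | hdist y c == i]|)%N.
Proof.
move=> syn_xy.
have [k k0 syn_y] : exists2 k, k != 0 & syn y = k * syn x.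
  have [synx0|synxN0] := eqVneq (syn x) 0.
    by exists 1; rewrite ?oner_eq0 // synx0 mulr0; apply/eqP; rewrite -syn_xy synx0.
  by exists (syn y / syn x); rewrite ?divfK // mulf_neq0 ?invr_eq0 // -syn_xy.
pose f c := y + k *: (c - x).
have f_inj : injective f by move=> c d /addrI/(scalerI k0)/addIr.
rewrite -(card_imset _ f_inj); apply/subset_leq_card/subsetP => z /imsetP[c].
rewrite !inE => /andP[cC /eqP <-] ->; apply/andP; split.
  by rewrite /f syndromeD syndromeZ syndromeB syn_y (eqP cC) sub0r mulrN addrN.
by rewrite /hdist /f opprD addrA subrr add0r -scalerN opprB wt_scale.
Qed.

Lemma completely_regular_parity_code : completely_regular C.
Proof.
move=> x y d_xy i; have syn_xy : (syn x == 0) = (syn y == 0).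
  by move: d_xy; rewrite !dist_parity_code; do 2!case: (_ == 0).
by apply/eqP; rewrite eqn_leq !card_parity_sphere_le // syn_xy.
Qed.

Lemma min_dist_parity_code_le c : c \in C -> c != 0 -> (min_dist C <= wt c)%N.
Proof.
move=> cC c0; have zC : 0 \in C by rewrite mem_parity_code /syndrome mul0mx mxE.
by have := min_dist_le cC zC c0; rewrite /hdist subr0.
Qed.

Lemma min_dist_parity_code_ge r : (r <= n)%N ->
  (forall c, c \in C -> c != 0 -> (r <= wt c)%N) -> (r <= min_dist C)%N.
Proof.
move=> rn wt_ge; apply: min_dist_ge => // c d cC dC cd.
apply: wt_ge; last by rewrite subr_eq0.
by move: cC dC; rewrite !mem_parity_code syndromeB => /eqP-> /eqP->; rewrite subrr.
Qed.

Lemma min_dist_parity_code_zero_check i : s i 0 = 0 -> min_dist C = 1%N.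
Proof.
move=> si0; apply/eqP; rewrite eqn_leq; apply/andP; split.
  have dC : delta_mx 0 i \in C by rewrite mem_parity_code syndrome_delta si0.
  by rewrite -[X in (_ <= X)%N](wt_delta F i) min_dist_parity_code_le // -wt_gt0 wt_delta.
apply: min_dist_parity_code_ge => [|c _]; last by rewrite wt_gt0.
exact: leq_ltn_trans (leq0n i) (ltn_ord i).
Qed.

Lemma min_dist_parity_code_full :
  (1 < n)%N -> (forall i, s i 0 != 0) -> min_dist C = 2%N.
Proof.
move=> n_gt1 s_full; apply/eqP; rewrite eqn_leq; apply/andP; split.
  pose i : 'I_n := Ordinal (ltnW n_gt1); pose j : 'I_n := Ordinal n_gt1.
  pose c : 'rV_n := s j 0 *: delta_mx 0 i - s i 0 *: delta_mx 0 j.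
  have cC : c \in C.
    by rewrite mem_parity_code syndromeB !syndromeZ !syndrome_delta mulrC subrr.
  have c0 : c != 0.
    by apply/rV0Pn; exists i; rewrite !mxE !eqxx /= mulr1 mulr0 subr0 s_full.
  apply: leq_trans (min_dist_parity_code_le cC c0) _.
  apply: leq_trans (wt_add_le _ _) _; rewrite -scaleNr.
  by rewrite -[2%N]/(1 + 1)%N leq_add // (leq_trans (wt_scale_le _ _)) ?wt_delta.
apply: min_dist_parity_code_ge => // c cC c0.
have wt_c_gt0 : (0 < wt c)%N by rewrite wt_gt0.
rewrite ltn_neqAle wt_c_gt0 andbT eq_sym; apply/eqP => /wt_eq1[j cj0 c_def].
move: cC; rewrite mem_parity_code c_def syndromeZ syndrome_delta.
by rewrite mulf_eq0 (negbTE cj0) (negbTE (s_full j)).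
Qed.

End ParityCode.

Section SystematicCode.
Variables (F : finFieldType) (m : nat) (h : 'cV[F]_m).
Local Notation s := (col_mx (- h) 1 : 'cV[F]_(m + 1)).

Lemma code_of_gen_Ih : code_of_gen (gen_Ih h) = parity_code s.
Proof.
apply/setP => v; rewrite inE /syndrome.
have -> : v *m s = rsubmx v - lsubmx v *m h.
  by rewrite -{1}[v]hsubmxK mul_row_col mulmx1 mulmxN addrC.
apply/imsetP/eqP => [[u _ ->]|synv0].
  by rewrite /gen_Ih mul_mx_row mulmx1 row_mxKl row_mxKr subrr mxE.
exists (lsubmx v) => //; rewrite /gen_Ih mul_mx_row mulmx1 -{1}[v]hsubmxK.
congr row_mx; apply/rowP => j; rewrite ord1; apply/eqP.
by move: synv0; rewrite !mxE => /eqP; rewrite subr_eq0.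
Qed.

Lemma Ih_check_neq0 : s != 0.
Proof. by apply/cV0Pn; exists (rshift m 0); rewrite col_mxEd mxE oner_eq0. Qed.

Lemma Ih_check_zero : (wt h^T < m)%N -> exists i, s i 0 = 0.
Proof.
move=> wt_h; have : ~~ [forall i, h^T 0 i != 0].
  by apply: contraTN wt_h => /forallP/wt_eqP/eqP->; rewrite ltnn.
rewrite negb_forall => /existsP[i]; rewrite negbK mxE => /eqP hi0.
by exists (lshift 1 i); rewrite col_mxEu mxE hi0 oppr0.
Qed.

Lemma Ih_check_full : wt h^T = m -> forall i, s i 0 != 0.
Proof.
move=> /eqP/wt_eqP h_full i; rewrite -(splitK i); case: (split i) => j /=.
  by rewrite col_mxEu mxE oppr_eq0; have := h_full j; rewrite mxE.
by rewrite col_mxEd ord1 mxE oner_eq0.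
Qed.

End SystematicCode.

Theorem theorem3p1 (F : finFieldType) (m : nat) (h : 'cV[F]_m) :
  (1 <= m)%N -> h != 0 ->
  let C := code_of_gen (gen_Ih h) in
  ((wt h^T < m)%N ->
     completely_regular C /\ min_dist C = 1%N /\ covering_radius C = 1%N) /\
  (wt h^T = m ->
     completely_regular C /\ min_dist C = 2%N /\ covering_radius C = 1%N).
Proof.
move=> m_gt0 _ C; rewrite /C code_of_gen_Ih.
have C_reg := @completely_regular_parity_code F _ (col_mx (- h) 1).
have C_rho := covering_radius_parity_code (Ih_check_neq0 h).
split=> wt_h; do !split=> //.
  by have [i si0] := Ih_check_zero wt_h; apply: min_dist_parity_code_zero_check si0.
by apply: min_dist_parity_code_full; [rewrite addn1 ltnS | exact: Ih_check_full].
Qed.
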